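(* Let $B$ be a Batanin tree and $n\in\mathbb N$. Then the cosource and cotarget $s^B_n,t^B_n\colon\mathrm{Pos}(\partial_nB)\to\mathrm{Pos}(B)$ each induce bijections between the sets of positions of dimension $k$ for every $k<n$. Moreover, they are injective on positions of dimension $n$, and for every position $p\in\mathrm{Pos}_n(B)$ there exists a unique position $q\in\mathrm{Pos}_n(\partial_nB)$ such that $s^B_n(q)$, $t^B_n(q)$ and $p$ are parallel.
   Context: Batanin trees are generated inductively: for every finite list $B_1,\dots,B_n$ ($n\ge0$) of Batanin trees there is a tree $[B_1,\dots,B_n]$. The suspension $\Sigma Y$ of a globular set $Y$ has $0$-cells $v_-,v_+$ and $(\Sigma Y)_{n+1}=Y_n$, every $1$-cell having source $v_-$ and target $v_+$. The globular set of positions is $\mathrm{Pos}([B_1,\dots,B_n])=\Sigma\mathrm{Pos}(B_1)\vee\cdots\vee\Sigma\mathrm{Pos}(B_n)$, the iterated wedge sum gluing $v_+$ of each summand to $v_-$ of the next (a single $0$-cell when $n=0$); $\mathrm{Pos}_n(B)$ denotes its set of $n$-cells. Two cells are parallel if they have the same source and target (all $0$-cells are parallel). Boundary: $\partial_0B=[\,]$, $\partial_{k+1}[B_1,\dots,B_n]=[\partial_kB_1,\dots,\partial_kB_n]$. Cosource/cotarget $s^B_k,t^B_k\colon\mathrm{Pos}(\partial_kB)\to\mathrm{Pos}(B)$ for $B=[B_1,\dots,B_n]$: $s^B_0$ picks $\mathrm{inc}_1(v_-)$, $t^B_0$ picks $\mathrm{inc}_n(v_+)$, $s^B_{k+1}=\bigvee_i\Sigma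 s^{B_i}_k$, $t^B_{k+1}=\bigvee_i\Sigma t^{B_i}_k$, where $\mathrm{inc}_i$ is the inclusion of the $i$-th wedge summand. *)

From mathcomp Require Import all_boot.
Set Implicit Arguments. Unset Strict Implicit. Unset Printing Implicit Defensive.

(** Batanin trees: [Node [:: B_1; ...; B_n]] is [B_1,...,B_n]. *)
Inductive tree : Type := Node of seq tree.

Definition leaf : tree := Node [::].

Definition children (B : tree) : seq tree := let: Node l := B in l.

(** In Pos([B_1,...,B_n]) = ΣPos(B_1) ∨ ... ∨ ΣPos(B_n):
    - the 0-cells are the n+1 wedge points [Pt 0], ..., [Pt n]
      ([Pt (i-1)] = v_- of the i-th summand = v_+ of the (i-1)-th summand);
    - a (k+1)-cell is [Up i p] with i < n and p a k-cell of Pos(B_(i+1))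
      (0-indexed child i), i.e. the cell p of the i-th suspended summand. *)
Inductive pos : Type := Pt of nat | Up of nat & pos.

Fixpoint dim (p : pos) : nat :=
  match p with Pt _ => 0 | Up _ q => (dim q).+1 end.

Fixpoint valid (B : tree) (p : pos) : bool :=
  match p with
  | Pt j => j <= size (children B)
  | Up i q => (i < size (children B)) && valid (nth leaf (children B) i) q
  end.

Definition Pos_n (B : tree) (n : nat) (p : pos) : Prop := valid B p /\ dim p = n.

(** Source and target of a cell of positive dimension (in the suspension every
    1-cell of the i-th summand goes from v_- = Pt i to v_+ = Pt (i+1)).
    The value on 0-cells is irrelevant. *)
Fixpoint psrc (p : pos) : pos :=
  match p with
  | Pt j => Pt j
  | Up i (Pt _) => Pt i
  | Up i q => Up i (psrc q)
  end.

Fixpoint ptgt (p : pos) : pos :=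
  match p with
  | Pt j => Pt j
  | Up i (Pt _) => Pt i.+1
  | Up i q => Up i (ptgt q)
  end.

Definition parallel (p q : pos) : Prop :=
  dim p = dim q /\ (dim p = 0 \/ (psrc p = psrc q /\ ptgt p = ptgt q)).

Fixpoint bdry (k : nat) (B : tree) : tree :=
  match k with
  | 0 => leaf
  | k'.+1 => Node (map (bdry k') (children B))
  end.

(** Cosource ([b = true]) / cotarget ([b = false]) s^B_k, t^B_k :
    Pos(∂_k B) -> Pos(B).  s_0 picks inc_1(v_-) = Pt 0, t_0 picks
    inc_n(v_+) = Pt n; s_(k+1) = ∨_i Σ s^(B_i)_k (identity on wedge points,
    and on the i-th summand the suspension of s^(B_i)_k). *)
Fixpoint coface (b : bool) (k : nat) (B : tree) (p : pos) : pos :=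
  match k with
  | 0 => if b then Pt 0 else Pt (size (children B))
  | k'.+1 =>
      match p with
      | Pt j => Pt j
      | Up i q => Up i (coface b k' (nth leaf (children B) i) q)
      end
  end.

Definition cosource (k : nat) (B : tree) : pos -> pos := coface true k B.
Definition cotarget (k : nat) (B : tree) : pos -> pos := coface false k B.

(* Below dimension n the trees B and ∂_n B have the same branching, so
   Pos(∂_n B) and Pos(B) have the same k-cells for k < n, on which the
   cosource and cotarget act as the identity. An n-cell of ∂_n B is a path of
   length n down the tree ending at the unique 0-cell of a leaf; s and t send it
   to the first and last 0-cell of the corresponding subtree of B. Hence both
   images are parallel to every n-cell p of B along the same path, and that
   path ([to_bdry p]: p with its bottom 0-cell replaced by [Pt 0]) is the only
   n-cell of ∂_n B with this property. *)
From mathcomp Require Import all_boot.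
Set Implicit Arguments. Unset Strict Implicit.

Lemma bdry_leaf n : bdry n leaf = leaf.
Proof. by case: n. Qed.

Lemma nth_map_bdry n l i : nth leaf (map (bdry n) l) i = bdry n (nth leaf l i).
Proof. by elim: l i => [|x l IHl] [|i] //=; rewrite bdry_leaf. Qed.

Lemma parallel_sym p q : parallel p q -> parallel q p.
Proof. by case=> Ed [E0|[Es Et]]; split; [|left; rewrite -Ed| |right]. Qed.

Lemma parallel_trans p q r : parallel p q -> parallel q r -> parallel p r.
Proof.
case=> Epq [E0|[Espq Etpq]] [Eqr [E0'|[Esqr Etqr]]]; split; rewrite ?Epq //;
  by [left | left; rewrite -Epq | right; rewrite Espq Etpq].
Qed.

Lemma psrc_Up i p : 0 < dim p -> psrc (Up i p) = Up i (psrc p).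
Proof. by case: p. Qed.

Lemma ptgt_Up i p : 0 < dim p -> ptgt (Up i p) = Up i (ptgt p).
Proof. by case: p. Qed.

Lemma parallel_Up i j p q : dim p = dim q ->
  parallel (Up i p) (Up j q) <-> i = j /\ parallel p q.
Proof.
case: p => [x|x p] Ed.
  case: q Ed => [y|//] _; rewrite /parallel /=; split.
    by case=> _ [//|[[->] _]]; split=> //; split=> //; left.
  by case=> -> _; split=> //; right.
have Pp : 0 < dim (Up x p) by [].
have Pq : 0 < dim q by rewrite -Ed.
rewrite /parallel (psrc_Up i Pp) (ptgt_Up i Pp) (psrc_Up j Pq) (ptgt_Up j Pq) /= -Ed.
split.
  by case=> _ [//|[[-> ->] [->]]]; split=> //; split=> //; right.
by case=> -> [_ [//|[-> ->]]]; split=> //; right.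
Qed.

Lemma dim_coface b n B q : dim q <= n -> dim (coface b n B q) = dim q.
Proof.
elim: n B q => [|n IH] B [j|i q] //=; first by case: b.
by move=> Hq; rewrite IH.
Qed.

Lemma valid_coface b n B q :
  valid (bdry n B) q -> dim q <= n -> valid B (coface b n B q).
Proof.
elim: n B q => [|n IH] [l] [j|i q] //=; first by move=> _ _; case: b => //=.
  by rewrite size_map.
by rewrite size_map nth_map_bdry => /andP[-> /IH]; apply.
Qed.

Lemma coface_inj b n B q1 q2 :
  valid (bdry n B) q1 -> valid (bdry n B) q2 -> dim q1 <= n -> dim q2 <= n ->
  coface b n B q1 = coface b n B q2 -> q1 = q2.
Proof.
elim: n B q1 q2 => [|n IH] B [j1|i1 q1] [j2|i2 q2] //=.
  by rewrite !leqn0 => /eqP-> /eqP->.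
rewrite size_map !nth_map_bdry => /andP[_ H1] /andP[_ H2] D1 D2 [Ei Eq].
by subst i2; rewrite (IH _ _ _ H1 H2 D1 D2 Eq).
Qed.

Lemma coface_surj b n B p : valid B p -> dim p < n ->
  exists2 q, valid (bdry n B) q /\ dim q = dim p & coface b n B q = p.
Proof.
elim: n B p => [//|n IH] B [j|i p] /=.
  by move=> Hj _; exists (Pt j); rewrite //= size_map.
move=> /andP[Hi /IH Hp] /Hp[q [Vq Dq] Eq].
exists (Up i q); last by rewrite /= Eq.
by rewrite /= size_map nth_map_bdry Hi Vq Dq.
Qed.

Lemma coface_parallel_inj b1 b2 n B q1 q2 :
  valid (bdry n B) q1 -> valid (bdry n B) q2 -> dim q1 = n -> dim q2 = n ->
  parallel (coface b1 n B q1) (coface b2 n B q2) -> q1 = q2.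
Proof.
elim: n B q1 q2 => [|n IH] B [j1|i1 q1] [j2|i2 q2] //=.
  by rewrite !leqn0 => /eqP-> /eqP->.
rewrite size_map !nth_map_bdry => /andP[_ H1] /andP[_ H2] [D1] [D2].
have Ed : dim (coface b1 n (nth leaf (children B) i1) q1) =
          dim (coface b2 n (nth leaf (children B) i2) q2).
  by rewrite !dim_coface ?D1 ?D2.
move/(parallel_Up _ _ Ed) => [Ei P]; subst i2.
by rewrite (IH _ _ _ H1 H2 D1 D2 P).
Qed.

Lemma coface_Pos_n b n B k q :
  k <= n -> Pos_n (bdry n B) k q -> Pos_n B k (coface b n B q).
Proof. by move=> Hk [Vq Dq]; split; rewrite ?dim_coface ?valid_coface // Dq. Qed.

Lemma coface_Pos_n_inj b n B k q1 q2 : k <= n ->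
  Pos_n (bdry n B) k q1 -> Pos_n (bdry n B) k q2 ->
  coface b n B q1 = coface b n B q2 -> q1 = q2.
Proof. by move=> Hk [V1 D1] [V2 D2]; apply: coface_inj; rewrite ?D1 ?D2. Qed.

Lemma coface_Pos_n_surj b n B k p : k < n -> Pos_n B k p ->
  exists2 q, Pos_n (bdry n B) k q & coface b n B q = p.
Proof.
move=> Hk [Vp Dp]; have [|q [Vq Dq] Eq] := coface_surj b (n := n) Vp.
  by rewrite Dp.
by exists q; rewrite /Pos_n ?Dq.
Qed.

Fixpoint to_bdry (p : pos) : pos :=
  match p with Pt _ => Pt 0 | Up i q => Up i (to_bdry q) end.

Lemma dim_to_bdry p : dim (to_bdry p) = dim p.
Proof. by elim: p => //= i p ->. Qed.

Lemma valid_to_bdry B p : valid B p -> valid (bdry (dim p) B) (to_bdry p).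
Proof.
elim: p B => [j|i p IH] B //=.
by case/andP=> Hi /IH Hp; rewrite size_map nth_map_bdry Hi.
Qed.

Lemma to_bdry_Pos_n n B p : Pos_n B n p -> Pos_n (bdry n B) n (to_bdry p).
Proof. by case=> Vp <-; split; [exact: valid_to_bdry | exact: dim_to_bdry]. Qed.

Lemma coface_to_bdry_parallel b B p :
  parallel (coface b (dim p) B (to_bdry p)) p.
Proof.
elim: p B => [j|i p IH] B /=; first by split; [case: b | left; case: b].
apply/parallel_Up; last exact: (conj erefl (IH _)).
by rewrite dim_coface dim_to_bdry.
Qed.

Unset Implicit Arguments.

Theorem lemma4p1 (B : tree) (n : nat) :
  (forall f : pos -> pos, (f = cosource n B \/ f = cotarget n B) ->
     (* bijection Pos_k(∂_n B) -> Pos_k(B) for every k < n *)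
     (forall k : nat, k < n ->
        (forall q, Pos_n (bdry n B) k q -> Pos_n B k (f q)) /\
        (forall q1 q2, Pos_n (bdry n B) k q1 -> Pos_n (bdry n B) k q2 ->
           f q1 = f q2 -> q1 = q2) /\
        (forall p, Pos_n B k p -> exists q, Pos_n (bdry n B) k q /\ f q = p)) /\
     (* injective on positions of dimension n *)
     ((forall q, Pos_n (bdry n B) n q -> Pos_n B n (f q)) /\
      (forall q1 q2, Pos_n (bdry n B) n q1 -> Pos_n (bdry n B) n q2 ->
         f q1 = f q2 -> q1 = q2))) /\
  (forall p, Pos_n B n p ->
     exists! q, Pos_n (bdry n B) n q /\
       parallel (cosource n B q) (cotarget n B q) /\
       parallel (cosource n B q) p /\
       parallel (cotarget n B q) p).
Proof.
split=> [f Hf|p Pp].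
  have [b ->] : exists b, f = coface b n B by case: Hf => ->; eexists.
  split=> [k Hk|].
    split=> [q|]; first exact: coface_Pos_n (ltnW Hk).
    split=> [q1 q2|p]; first exact: coface_Pos_n_inj (ltnW Hk).
    by move=> /(coface_Pos_n_surj b Hk) [q]; exists q.
  split=> [q|q1 q2]; first exact: coface_Pos_n (leqnn n).
  exact: coface_Pos_n_inj (leqnn n).
have [Vq Dq] := to_bdry_Pos_n Pp.
have Psrc := coface_to_bdry_parallel true B p.
have Ptgt := coface_to_bdry_parallel false B p.
case: Pp => _ Dp; rewrite Dp in Psrc Ptgt.
exists (to_bdry p); split.
  by split; [split | split; [apply: parallel_trans Psrc (parallel_sym Ptgt) | split]].
move=> q [[Vq' Dq'] [_ [Psrc' _]]].
apply: coface_parallel_inj Vq Vq' Dq Dq' _.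
exact: parallel_trans Psrc (parallel_sym Psrc').
Qed.
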